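(* No free adequate semigroup or free adequate monoid on a non-empty set is finitely generated as a semigroup or monoid (i.e. using multiplication only).
   Context: For a semigroup $S$ let $S^1=S$ if $S$ is a monoid and otherwise $S$ with an identity adjoined. $a\,\mathcal{L}^*\,b$ iff for all $x,y\in S^1$: $ax=ay\Leftrightarrow bx=by$; $a\,\mathcal{R}^*\,b$ iff for all $x,y\in S^1$: $xa=ya\Leftrightarrow xb=yb$. $S$ is adequate if its idempotents commute and every $\mathcal{L}^*$-class and every $\mathcal{R}^*$-class contains an idempotent (necessarily unique); $x^+$ is the idempotent $\mathcal{R}^*$-related to $x$, $x^*$ the idempotent $\mathcal{L}^*$-related to $x$. Adequate semigroups [monoids] are viewed as $(2,1,1)$-algebras [$(2,1,1,0)$-algebras], morphisms preserving all operations. The free adequate semigroup [monoid] on a set $\Sigma$ is an adequate semigroup [monoid] containing $\Sigma$ such that every map from $\Sigma$ to an adequate semigroup [monoid] extends uniquely to a morphism. *)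

From Stdlib Require Import List.

Section RawDefs.
Variable S : Type.
Variable mul : S -> S -> S.

Definition is_idem (e : S) : Prop := mul e e = e.

(* S^1 is modelled as [option S], [None] being the adjoined identity.
   (If S is already a monoid, adjoining a fresh identity gives the same
   relations L*, R*, since a * 1 = a for the old identity too.) *)
Definition ract (a : S) (x : option S) : S :=
  match x with None => a | Some x => mul a x end.
Definition lact (x : option S) (a : S) : S :=
  match x with None => a | Some x => mul x a end.

Definition Lstar (a b : S) : Prop :=
  forall x y : option S, ract a x = ract a y <-> ract b x = ract b y.
Definition Rstar (a b : S) : Prop :=
  forall x y : option S, lact x a = lact y a <-> lact x b = lact y b.

Inductive sg_gen (A : S -> Prop) : S -> Prop :=
| sg_gen_base a : A a -> sg_gen A a
| sg_gen_mul x y : sg_gen A x -> sg_gen A y -> sg_gen A (mul x y).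

Definition fg_semigroup : Prop :=
  exists l : list S, forall s : S, sg_gen (fun x => In x l) s.

Variable one : S.

Inductive mon_gen (A : S -> Prop) : S -> Prop :=
| mon_gen_one : mon_gen A one
| mon_gen_base a : A a -> mon_gen A a
| mon_gen_mul x y : mon_gen A x -> mon_gen A y -> mon_gen A (mul x y).

Definition fg_monoid : Prop :=
  exists l : list S, forall s : S, mon_gen (fun x => In x l) s.

End RawDefs.

Record adequate_semigroup := {
  as_car :> Type;
  as_mul : as_car -> as_car -> as_car;
  as_plus : as_car -> as_car;
  as_star : as_car -> as_car;
  as_assoc : forall x y z, as_mul x (as_mul y z) = as_mul (as_mul x y) z;
  as_idem_comm : forall e f, is_idem as_car as_mul e -> is_idem as_car as_mul f ->
                   as_mul e f = as_mul f e;
  as_plus_idem : forall x, is_idem as_car as_mul (as_plus x);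
  as_plus_R : forall x, Rstar as_car as_mul x (as_plus x);
  as_star_idem : forall x, is_idem as_car as_mul (as_star x);
  as_star_L : forall x, Lstar as_car as_mul x (as_star x)
}.

Record adequate_monoid := {
  am_car :> Type;
  am_mul : am_car -> am_car -> am_car;
  am_one : am_car;
  am_plus : am_car -> am_car;
  am_star : am_car -> am_car;
  am_assoc : forall x y z, am_mul x (am_mul y z) = am_mul (am_mul x y) z;
  am_mul1 : forall x, am_mul x am_one = x;
  am_1mul : forall x, am_mul am_one x = x;
  am_idem_comm : forall e f, is_idem am_car am_mul e -> is_idem am_car am_mul f ->
                   am_mul e f = am_mul f e;
  am_plus_idem : forall x, is_idem am_car am_mul (am_plus x);
  am_plus_R : forall x, Rstar am_car am_mul x (am_plus x);
  am_star_idem : forall x, is_idem am_car am_mul (am_star x);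
  am_star_L : forall x, Lstar am_car am_mul x (am_star x)
}.

Definition as_morph (S T : adequate_semigroup) (f : S -> T) : Prop :=
  (forall x y, f (as_mul S x y) = as_mul T (f x) (f y)) /\
  (forall x, f (as_plus S x) = as_plus T (f x)) /\
  (forall x, f (as_star S x) = as_star T (f x)).

Definition am_morph (S T : adequate_monoid) (f : S -> T) : Prop :=
  (forall x y, f (am_mul S x y) = am_mul T (f x) (f y)) /\
  (forall x, f (am_plus S x) = am_plus T (f x)) /\
  (forall x, f (am_star S x) = am_star T (f x)) /\
  f (am_one S) = am_one T.

Definition is_free_adequate_semigroup (Sigma : Type) (S : adequate_semigroup)
  (i : Sigma -> S) : Prop :=
  (forall a b, i a = i b -> a = b) /\
  forall (T : adequate_semigroup) (g : Sigma -> T),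
    exists h : S -> T, as_morph S T h /\ (forall a, h (i a) = g a) /\
      forall h' : S -> T, as_morph S T h' -> (forall a, h' (i a) = g a) ->
        forall s, h' s = h s.

Definition is_free_adequate_monoid (Sigma : Type) (M : adequate_monoid)
  (i : Sigma -> M) : Prop :=
  (forall a b, i a = i b -> a = b) /\
  forall (T : adequate_monoid) (g : Sigma -> T),
    exists h : M -> T, am_morph M T h /\ (forall a, h (i a) = g a) /\
      forall h' : M -> T, am_morph M T h' -> (forall a, h' (i a) = g a) ->
        forall s, h' s = h s.

From Stdlib Require Import List Lia PeanoNat.

(* Every free adequate semigroup or monoid on a non-empty set maps into the
   following small adequate monoid T on pairs (d, j) of naturals: (d, j) is a
   walk on the naturals from 0 to d whose furthest point lies j beyond d (the
   one-letter Munn tree, cut at the origin).  The overshoot j of a product is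
   at most the larger overshoot of its factors, so a finitely generated
   subsemigroup of T has bounded overshoot; but the idempotent (a^n)^+ of a
   generator a maps to (0, n). *)

Definition Tmul (x y : nat * nat) : nat * nat :=
  (fst x + fst y, Nat.max (snd x - fst y) (snd y)).
Definition Tplus (x : nat * nat) : nat * nat := (0, snd x + fst x).
Definition Tstar (x : nat * nat) : nat * nat := (0, snd x).

Ltac T_solve := cbn; rewrite ?pair_equal_spec; lia.

Lemma Tmul_assoc x y z : Tmul x (Tmul y z) = Tmul (Tmul x y) z.
Proof. destruct x, y, z; unfold Tmul; T_solve. Qed.

Lemma Tmul_idem_comm e f :
  is_idem _ Tmul e -> is_idem _ Tmul f -> Tmul e f = Tmul f e.
Proof.
  destruct e, f; unfold is_idem, Tmul; cbn; rewrite !pair_equal_spec; lia.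
Qed.

Lemma Tplus_idem x : is_idem _ Tmul (Tplus x).
Proof. destruct x; unfold is_idem, Tmul, Tplus; T_solve. Qed.

Lemma Tstar_idem x : is_idem _ Tmul (Tstar x).
Proof. destruct x; unfold is_idem, Tmul, Tstar; T_solve. Qed.

Lemma Tplus_Rstar x : Rstar _ Tmul x (Tplus x).
Proof.
  destruct x; intros [[]|] [[]|]; unfold lact, Tmul, Tplus; cbn;
    rewrite !pair_equal_spec; lia.
Qed.

Lemma Tstar_Lstar x : Lstar _ Tmul x (Tstar x).
Proof.
  destruct x; intros [[]|] [[]|]; unfold ract, Tmul, Tstar; cbn;
    rewrite !pair_equal_spec; lia.
Qed.

Lemma Tmul1 x : Tmul x (0, 0) = x.
Proof. destruct x; unfold Tmul; T_solve. Qed.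

Lemma T1mul x : Tmul (0, 0) x = x.
Proof. destruct x; unfold Tmul; T_solve. Qed.

Definition T_adequate_semigroup : adequate_semigroup :=
  {| as_car := nat * nat; as_mul := Tmul; as_plus := Tplus; as_star := Tstar;
     as_assoc := Tmul_assoc; as_idem_comm := Tmul_idem_comm;
     as_plus_idem := Tplus_idem; as_plus_R := Tplus_Rstar;
     as_star_idem := Tstar_idem; as_star_L := Tstar_Lstar |}.

Definition T_adequate_monoid : adequate_monoid :=
  {| am_car := nat * nat; am_mul := Tmul; am_one := (0, 0);
     am_plus := Tplus; am_star := Tstar;
     am_assoc := Tmul_assoc; am_mul1 := Tmul1; am_1mul := T1mul;
     am_idem_comm := Tmul_idem_comm;
     am_plus_idem := Tplus_idem; am_plus_R := Tplus_Rstar;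
     am_star_idem := Tstar_idem; am_star_L := Tstar_Lstar |}.

Lemma snd_Tmul_le x y : snd (Tmul x y) <= Nat.max (snd x) (snd y).
Proof. destruct x, y; unfold Tmul; cbn; lia. Qed.

Lemma fg_monoid_fg_semigroup (A : Type) (mul : A -> A -> A) (one : A) :
  fg_monoid A mul one -> fg_semigroup A mul.
Proof.
  intros [l Hl]; exists (one :: l); intro s.
  induction (Hl s) as [| a Ha | x y _ IHx _ IHy].
  - now constructor; left.
  - now constructor; right.
  - now constructor.
Qed.

Section HeightMorphism.

Variables (A : Type) (mul : A -> A -> A) (h : A -> nat * nat).
Hypothesis h_mul : forall x y, h (mul x y) = Tmul (h x) (h y).

Lemma snd_sg_gen_le (l : list A) (s : A) :
  sg_gen A mul (fun x => In x l) s ->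
  snd (h s) <= list_max (map (fun y => snd (h y)) l).
Proof.
  induction 1 as [a Ha | x y _ IHx _ IHy].
  - assert (Hall := proj1 (list_max_le (map (fun y => snd (h y)) l) _) (le_n _)).
    rewrite Forall_forall in Hall; apply Hall, (in_map (fun y => snd (h y))), Ha.
  - rewrite h_mul; eapply Nat.le_trans; [apply snd_Tmul_le | lia].
Qed.

Lemma Tmul_image_pow (a : A) :
  h a = (1, 0) -> forall n, exists y, h y = (S n, 0).
Proof.
  intros ha n; induction n as [| n [y hy]]; [now exists a |].
  exists (mul y a); rewrite h_mul, hy, ha; unfold Tmul; T_solve.
Qed.

Lemma not_fg_semigroup_of_Tplus_morph (plus : A -> A) (a : A) :
  (forall x, h (plus x) = Tplus (h x)) -> h a = (1, 0) ->
  ~ fg_semigroup A mul.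
Proof.
  intros h_plus ha [l Hl].
  set (bound := list_max (map (fun y => snd (h y)) l)).
  destruct (Tmul_image_pow a ha bound) as [y hy].
  assert (Hb := snd_sg_gen_le l (plus y) (Hl (plus y))).
  rewrite h_plus, hy in Hb; cbn in Hb; lia.
Qed.

End HeightMorphism.

Theorem theorem7p3 :
  (forall (Sigma : Type) (S : adequate_semigroup) (i : Sigma -> S),
      inhabited Sigma -> is_free_adequate_semigroup Sigma S i ->
      ~ fg_semigroup S (as_mul S)) /\
  (forall (Sigma : Type) (M : adequate_monoid) (i : Sigma -> M),
      inhabited Sigma -> is_free_adequate_monoid Sigma M i ->
      ~ fg_semigroup M (am_mul M) /\ ~ fg_monoid M (am_mul M) (am_one M)).
Proof.
  split.
  - intros Sigma S i [s0] [_ Hfree].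
    destruct (Hfree T_adequate_semigroup (fun _ => (1, 0)))
      as [h [[h_mul [h_plus _]] [h_i _]]].
    exact (not_fg_semigroup_of_Tplus_morph _ _ h h_mul _ (i s0) h_plus (h_i s0)).
  - intros Sigma M i [s0] [_ Hfree].
    destruct (Hfree T_adequate_monoid (fun _ => (1, 0)))
      as [h [[h_mul [h_plus _]] [h_i _]]].
    assert (Hsg := not_fg_semigroup_of_Tplus_morph _ _ h h_mul _ (i s0)
                     h_plus (h_i s0)).
    split; [exact Hsg |].
    intro Hmon; exact (Hsg (fg_monoid_fg_semigroup _ _ _ Hmon)).
Qed.
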